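(* Let $K$ be a good triangulation of $P^n$, let $T\in C^2(K,W;\mathbb Q)$ be a Thom cocycle of $H_{1,0}$, and let $\mathcal O$ be a good ordering of $K$ with respect to $H_{1,0}$. Then: (1) the map $\alpha\mapsto T\overset{\mathcal O}{\cap}\alpha$ commutes with the boundary $\delta$; (2) the image of $T\overset{\mathcal O}{\cap}:C_k(K;\mathbb Q)\to C_{k-2}(K;\mathbb Q)$ is contained in $C_{k-2}(L_1;\mathbb Q)$, where $L_1=K\cap H_{1,0}$. Consequently $T\overset{\mathcal O}{\cap}$ induces a homomorphism of complexes $C_k(K,\mathbf D^n;\mathbb Q)\to C_{k-2}(L_1,\mathbf D^{n-1};\mathbb Q)$.
   Context: $P^n=(\mathbb P^1_{\mathbb C})^n$ with coordinates $z_1,\dots,z_n$; $H_{i,\alpha}=\{z_i=\alpha\}$ for $\alpha\in\{0,\infty\}$; cubical faces are nonempty intersections of one or more $H_{i,\alpha}$; $\mathbf D^n=\bigcup_i\{z_i=1\}$. $H_{1,0}$ is identified with $P^{n-1}$ via $(0,z_2,\dots,z_n)\mapsto(z_2,\dots,z_n)$, and $\mathbf D^{n-1}$ denotes $\mathbf D^n\cap H_{1,0}$. A good triangulation of $P^n$ is a finite simplicial complex $K$ with a semi-algebraic homeomorphism $|K|\to P^n$ (used to identify them) such that: (1) $\mathbf D^n$ is a subcomplex; (2) the image of the relative interior of each simplex is a regular submanifold; (3) every finite union of cubical faces is a full subcomplex (a subcomplex $L$ such that any simplex of $K$ all of whose vertices lie in $L$ belongs to $L$); (4) each set $\{|z_i|\le1\}$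 is a subcomplex. Let $W$ be the union of the simplices of $K$ not meeting $H_{1,0}$ and $\Delta=\{|z_1|<1\}$. There are isomorphisms $H^2(K,W;\mathbb Q)\leftarrow H^2_{\rm sing}(P^n,P^n-H_{1,0};\mathbb Q)\to H^2_{\rm sing}(\Delta,\Delta-H_{1,0};\mathbb Q)$. A Thom cocycle is a simplicial cocycle $T\in C^2(K,W;\mathbb Q)$ (i.e. vanishing on simplices in $W$) whose class corresponds under these isomorphisms to $\delta[\frac{dz_1}{2\pi i z_1}]$, where $[\frac{dz_1}{2\pi i z_1}]\in H^1_{\rm sing}(\Delta-H_{1,0};\mathbb Q)$ and $\delta$ is the connecting homomorphism. An ordering of $K$ is a partial order on the vertices whose restriction to the vertices of each simplex is total; it is good with respect to $H_{1,0}$ if whenever a vertex $v$ lies on $H_{1,0}$ and $w\ge v$, then $w\in H_{1,0}$. For $u\in C^p(K;\mathbb Q)$ and a simplex $\alpha=[v_0,\dots,v_k]$ with $v_0<\dots<v_k$, $u\overset{\mathcal O}{\cap}\alpha=u([v_0,\dots,v_p])\,[v_p,\dots,v_k]$, extended linearly. *)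

From mathcomp Require Import all_boot all_order all_algebra.
Set Implicit Arguments. Unset Strict Implicit. Unset Printing Implicit Defensive.
Import GRing.Theory Num.Theory.
Local Open Scope ring_scope.

Section Simplicial.
Variable V : finType.

Definition is_complex (K : {set {set V}}) : Prop :=
  (forall s, s \in K -> s != set0) /\
  (forall s t : {set V}, s \in K -> t \subset s -> t != set0 -> t \in K).

Definition subcomplex (L K : {set {set V}}) : Prop :=
  L \subset K /\ is_complex L.

Definition vert (L : {set {set V}}) : {set V} := [set v | [set v] \in L].

Definition full (L K : {set {set V}}) : Prop :=
  forall s, s \in K -> s \subset vert L -> s \in L.

Definition ordering (K : {set {set V}}) (le : rel V) : Prop :=
  reflexive le /\ antisymmetric le /\ transitive le /\
  (forall s, s \in K -> {in s &, forall v w, le v w || le w v}).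

Definition good_ordering (L : {set {set V}}) (le : rel V) : Prop :=
  forall v w, v \in vert L -> le v w -> w \in vert L.

Definition ltv (le : rel V) v w := (v != w) && le v w.

(* position (0-based) of v in the simplex s for the ordering *)
Definition rank (le : rel V) (s : {set V}) (v : V) : nat :=
  #|[set w in s | ltv le w v]|.

(* simplicial chains / cochains with rational coefficients,
   indexed by the (ordered) simplices *)
Definition chain := {set V} -> rat.
Definition cochain := {set V} -> rat.

Definition chain_in (S : {set {set V}}) (k : nat) (c : chain) : Prop :=
  forall s, c s != 0 -> s \in S /\ #|s| = k.+1.

(* boundary:  d[v0..vk] = sum_i (-1)^i [v0..^vi..vk] *)
Definition bd (le : rel V) (c : chain) : chain := fun t =>
  if t == set0 then 0 else
  \sum_(v in ~: t) (-1) ^+ (rank le (v |: t) v) * c (v |: t).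

(* coboundary: (du)[v0..v(p+1)] = sum_i (-1)^i u[v0..^vi..v(p+1)] *)
Definition cobd (le : rel V) (u : cochain) : cochain := fun s =>
  \sum_(v in s) (-1) ^+ (rank le s v) * u (s :\ v).

Definition front (le : rel V) (p : nat) (s : {set V}) : {set V} :=
  [set v in s | (rank le s v <= p)%N].
Definition back (le : rel V) (p : nat) (s : {set V}) : {set V} :=
  [set v in s | (p <= rank le s v)%N].

(* ordered cap product: u cap [v0..vk] = u([v0..vp]) [vp..vk] (for k >= p),
   extended linearly; simplices of dimension < p give 0 *)
Definition cap (le : rel V) (p : nat) (u : cochain) (c : chain) : chain :=
  fun t => \sum_(s : {set V} | (p < #|s|)%N)
             (if back le p s == t then c s * u (front le p s) else 0).

(* W = simplices of K not meeting H_{1,0}, i.e. with no vertex in L1 *)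
Definition Wcomplex (K L1 : {set {set V}}) : {set {set V}} :=
  [set s in K | [disjoint s & vert L1]].

Definition rel_2cocycle (K W : {set {set V}}) (le : rel V) (T : cochain) : Prop :=
  (forall s, s \in K -> #|s| = 4%N -> cobd le T s = 0) /\
  (forall s, s \in W -> #|s| = 3%N -> T s = 0).

End Simplicial.

(* By linearity it suffices to treat one ordered simplex s = [v0..vk].  Then
   d(T cap s) = T[v0v1v2] d[v2..vk], while T cap ds sums over the faces
   obtained by deleting one vertex vi.  For i >= 3 the front face is unchanged
   and these terms are exactly those of d(T cap s) other than the one deleting
   v2; the faces deleting v0, v1 or v2 all have back face [v3..vk] and
   contribute sum_(i <= 2) (-1)^i T[v0..^vi..v3] [v3..vk], which is the missing
   term T[v0v1v2] [v3..vk] because (dT)[v0v1v2v3] = 0.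
   For the support: if T[v0v1v2] <> 0 then [v0v1v2] is not in W, so one of
   v0, v1, v2 lies on H_{1,0}; as the ordering is good, so do v2, ..., vk, and
   since L1 is full the back face [v2..vk] lies in L1. *)

From mathcomp Require Import all_boot all_algebra zify.
Set Implicit Arguments. Unset Strict Implicit. Unset Printing Implicit Defensive.
Import GRing.Theory.
Local Open Scope ring_scope.

Lemma sum_only1 (R : nmodType) (I : finType) (P : pred I) (F : I -> R) i0 :
  (forall i, P i -> i != i0 -> F i = 0) ->
  \sum_(i | P i) F i = if P i0 then F i0 else 0.
Proof.
move=> F0; case: (boolP (P i0)) => Pi0.
  by rewrite (bigD1 i0) //= big1 ?addr0 // => i /andP[]; exact: F0.
by rewrite big1 // => i Pi; apply: F0 => //; apply: contraNneq Pi0 => <-.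
Qed.

Section ElementaryChains.
Variables (V : finType) (le : rel V) (T : cochain V).

Definition elem_chain (s : {set V}) : chain V := fun t => (t == s)%:R.

Definition chain_linear (L : chain V -> chain V) : Prop :=
  forall c t, L c t = \sum_s c s * L (elem_chain s) t.

Lemma chain_elem_decomp (c : chain V) t : c t = \sum_s c s * elem_chain s t.
Proof.
rewrite (sum_only1 (i0 := t)) /elem_chain ?eqxx ?mulr1 // => s _ ns.
by rewrite eq_sym (negbTE ns) mulr0.
Qed.

Lemma bd_linear : chain_linear (bd le).
Proof.
move=> c t; rewrite /bd; case: ifP => _; first by rewrite big1 // => s _; rewrite mulr0.
under eq_bigr do rewrite (chain_elem_decomp c) mulr_sumr.
rewrite exchange_big /=; apply: eq_bigr => s _; rewrite mulr_sumr.
by apply: eq_bigr => v _; rewrite mulrCA.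
Qed.

Lemma cap_elem (s : {set V}) t : cap le 2 T (elem_chain s) t =
  if (2 < #|s|)%N && (back le 2 s == t) then T (front le 2 s) else 0.
Proof.
rewrite /cap (sum_only1 (i0 := s)) => [|u _ nus]; last first.
  by rewrite /elem_chain (negbTE nus) mul0r; case: ifP.
by rewrite /elem_chain eqxx mul1r; case: (2 < #|s|)%N => //=; case: ifP.
Qed.

Lemma cap_linear : chain_linear (cap le 2 T).
Proof.
move=> c t; under [RHS]eq_bigr do rewrite cap_elem.
rewrite /cap big_mkcond; apply: eq_bigr => s _.
by case: (2 < #|s|)%N; case: (back le 2 s == t); rewrite /= ?mulr0.
Qed.

Lemma chain_linear_comp L M :
  chain_linear L -> chain_linear M -> chain_linear (fun c => L (M c)).
Proof.
move=> linL linM c t; rewrite linL.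
under eq_bigr do rewrite linM mulr_suml.
rewrite exchange_big; apply: eq_bigr => s _.
by rewrite [in RHS]linL mulr_sumr; apply: eq_bigr => u _; rewrite mulrA.
Qed.

Lemma chain_linear_eq L M (c : chain V) :
  chain_linear L -> chain_linear M ->
  (forall s, c s != 0 -> L (elem_chain s) =1 M (elem_chain s)) -> L c =1 M c.
Proof.
move=> linL linM LM t; rewrite linL linM; apply: eq_bigr => s _.
by have [->|/LM->] := eqVneq (c s) 0; rewrite ?mul0r.
Qed.

Lemma cap_support (c : chain V) t : cap le 2 T c t != 0 ->
  exists s : {set V}, [/\ (2 < #|s|)%N, back le 2 s = t, c s != 0 & T (front le 2 s) != 0].
Proof.
rewrite cap_linear => /eqP cap_neq0.
have [s|s_zero] := pickP (fun s => c s * cap le 2 T (elem_chain s) t != 0); last first.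
  by case: cap_neq0; apply: big1 => s _; apply/eqP/negbFE/s_zero.
rewrite /= cap_elem mulf_eq0 negb_or => /andP[cs].
by case: ifP => [/andP[s2 /eqP bt] Tf|_]; [exists s | rewrite eqxx].
Qed.

End ElementaryChains.

Section OrderedSimplex.
Variables (V : finType) (le : rel V) (S : {set V}).
Hypotheses (le_anti : antisymmetric le) (le_trans : transitive le)
  (le_total : {in S &, forall v w, le v w || le w v}).
Local Notation r := (rank le S).
Local Notation n := #|S|.

Lemma ltv_trans x y z : ltv le x y -> ltv le y z -> ltv le x z.
Proof.
rewrite /ltv => /andP[nxy lxy] /andP[nyz lyz]; rewrite (le_trans lxy lyz) andbT.
by apply: contra nxy => /eqP exz; rewrite -exz in lyz; apply/eqP/le_anti/andP.
Qed.

Lemma ltvv x : ltv le x x = false.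
Proof. by rewrite /ltv eqxx. Qed.

Lemma ltv_rankE x y : x \in S -> y \in S -> ltv le x y = (r x < r y)%N.
Proof.
have rank_mono u w : u \in S -> ltv le u w -> (r u < r w)%N.
  move=> uS luw; apply: proper_card; apply/properP; split.
    by apply/subsetP=> z; rewrite !inE => /andP[-> /ltv_trans]; apply.
  by exists u; rewrite !inE ?uS ?luw // ltvv.
move=> xS yS; apply/idP/idP => [|rxy]; first exact: rank_mono.
have [exy|nxy] := eqVneq x y; first by rewrite exy ltnn in rxy.
have : ltv le x y || ltv le y x by rewrite /ltv nxy eq_sym nxy /= le_total.
case/orP=> // /(rank_mono _ _ yS) ryx.
by have := ltn_trans rxy ryx; rewrite ltnn.
Qed.

Lemma rank_inj x y : x \in S -> y \in S -> r x = r y -> x = y.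
Proof.
move=> xS yS e; apply/eqP/negPn/negP => nxy.
have : ltv le x y || ltv le y x by rewrite /ltv nxy eq_sym nxy /= le_total.
by rewrite !ltv_rankE // e ltnn.
Qed.

Lemma rank_lt_card x : x \in S -> (r x < n)%N.
Proof.
move=> xS; apply: proper_card; apply/properP; split.
  by apply/subsetP=> w; rewrite inE => /andP[].
by exists x => //; rewrite inE ltvv andbF.
Qed.

Lemma rank_neq x y : x \in S -> y \in S -> x != y -> r x != r y.
Proof. by move=> xS yS; apply: contra => /eqP/rank_inj->. Qed.

Lemma card_le_rank_window (A : {set V}) a k : A \subset S ->
  (forall x, x \in A -> (a <= r x < a + k)%N) -> (#|A| <= k)%N.
Proof.
move=> AS Awin; rewrite cardE -(size_iota a k) -(size_map r).
apply: uniq_leq_size => [|i /mapP[x]]; last by rewrite mem_enum mem_iota => /Awin ? ->.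
rewrite map_inj_in_uniq ?enum_uniq // => x y; rewrite !mem_enum => xA yA.
by apply: rank_inj; apply: (subsetP AS).
Qed.

Lemma card_rank_ltn m : (m <= n)%N -> #|[set x in S | (r x < m)%N]| = m.
Proof.
move=> mS; set A := [set x in S | _].
have AS : A \subset S by apply/subsetP=> x; rewrite inE => /andP[].
have cA : (#|A| <= m)%N.
  by apply: (@card_le_rank_window A 0 m AS) => x; rewrite inE => /andP[].
have cSA : (#|S :\: A| <= n - m)%N.
  apply: (@card_le_rank_window _ m _ (subsetDl _ _)) => x; rewrite !inE => /andP[+ xS].
  by rewrite xS /= -leqNgt => mx; have := rank_lt_card xS; lia.
have := cardsID A S; rewrite (setIidPr AS); lia.
Qed.

Lemma rank_subset (U : {set V}) x : U \subset S -> x \in U ->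
  rank le U x = #|[set y in U | (r y < r x)%N]|.
Proof.
move=> US xU; apply: eq_card => y; rewrite !inE.
by case yU: (y \in U) => //=; apply: ltv_rankE; apply: (subsetP US).
Qed.

Lemma card_rank_between a b : (a <= b <= n)%N ->
  #|[set x in S | (a <= r x < b)%N]| = (b - a)%N.
Proof.
move=> /andP[ab bS]; have aS : (a <= n)%N := leq_trans ab bS.
have := cardsID [set x in S | (r x < a)%N] [set x in S | (r x < b)%N].
have -> : [set x in S | (r x < b)%N] :&: [set x in S | (r x < a)%N]
        = [set x in S | (r x < a)%N].
  by apply/setIidPr/subsetP=> x; rewrite !inE => /andP[-> /leq_trans->].
have -> : [set x in S | (r x < b)%N] :\: [set x in S | (r x < a)%N]
        = [set x in S | (a <= r x < b)%N].
  by apply/setP=> x; rewrite !inE; case: (x \in S); rewrite //= -leqNgt.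
rewrite !card_rank_ltn //; lia.
Qed.

Lemma card_rank_geq a : #|[set x in S | (a <= r x)%N]| = (n - a)%N.
Proof.
case: (leqP a n) => an.
  rewrite -card_rank_between ?an ?leqnn //; apply: eq_card => x; rewrite !inE.
  by case xS: (x \in S); rewrite //= rank_lt_card // andbT.
have -> : [set x in S | (a <= r x)%N] = set0.
  apply/setP=> x; rewrite !inE; case xS: (x \in S) => //=.
  by have := rank_lt_card xS; lia.
by rewrite cards0; lia.
Qed.

Lemma exists_rank i : (i < n)%N -> exists2 x, x \in S & r x = i.
Proof.
move=> iS; have := @card_rank_between i i.+1; rewrite leqnSn iS subSnn.
move=> /(_ isT)/eqP/cards1P[x ex].
have : x \in [set x] by rewrite inE.
by rewrite -ex inE => /andP[xS ?]; exists x => //; lia.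
Qed.

Lemma rank_setD1 w x : w \in S -> x \in S -> x != w ->
  rank le (S :\ w) x = (r x - (r w < r x))%N.
Proof.
move=> wS xS nxw; rewrite rank_subset ?subsetDl // ?inE ?nxw //.
have -> : [set y in S :\ w | (r y < r x)%N] = [set y in S | (r y < r x)%N] :\ w.
  by apply/setP=> y; rewrite !inE andbA.
have := cardsD1 w [set y in S | (r y < r x)%N]; rewrite inE wS /=.
have -> : #|[set y in S | (r y < r x)%N]| = r x.
  by apply: eq_card => y; rewrite !inE; case yS: (y \in S); rewrite //= ltv_rankE.
by case: (r w < r x)%N => /=; lia.
Qed.

Lemma front_setD1_late w : w \in S -> (3 <= r w)%N ->
  front le 2 (S :\ w) = front le 2 S.
Proof.
move=> wS hw; apply/setP=> x; rewrite !inE.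
have [->|nxw] := eqVneq x w; first by rewrite wS /= leqNgt hw.
by case xS: (x \in S); rewrite //= rank_setD1 //; case: ltnP => /=; lia.
Qed.

Lemma back_setD1_late w : w \in S -> (3 <= r w)%N ->
  back le 2 (S :\ w) = back le 2 S :\ w.
Proof.
move=> wS hw; apply/setP=> x; rewrite !inE.
have [//|nxw] := eqVneq x w.
by case xS: (x \in S); rewrite //= rank_setD1 //; case: ltnP => /=; lia.
Qed.

Lemma front_setD1_early w : w \in S -> (r w <= 2)%N ->
  front le 2 (S :\ w) = [set x in S | (r x <= 3)%N] :\ w.
Proof.
move=> wS hw; apply/setP=> x; rewrite !inE.
have [//|nxw] := eqVneq x w.
case xS: (x \in S); rewrite //= rank_setD1 //.
by have := rank_neq xS wS nxw; case: ltnP => /=; lia.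
Qed.

Lemma back_setD1_early w : w \in S -> (r w <= 2)%N ->
  back le 2 (S :\ w) = [set x in S | (3 <= r x)%N].
Proof.
move=> wS hw; apply/setP=> x; rewrite !inE.
have [->|nxw] := eqVneq x w; first by rewrite /= wS leqNgt ltnS hw.
case xS: (x \in S); rewrite //= rank_setD1 //.
by have := rank_neq xS wS nxw; case: ltnP => /=; lia.
Qed.

Lemma back_setD1_rank2 v : v \in S -> r v = 2%N ->
  back le 2 S :\ v = [set x in S | (3 <= r x)%N].
Proof.
move=> vS rv; apply/setP=> x; rewrite !inE.
have [->|nxv] := eqVneq x v; first by rewrite vS rv.
by case xS: (x \in S) => //=; have := rank_neq xS vS nxv; rewrite rv; lia.
Qed.

Lemma first4_setD1_rank3 v : v \in S -> r v = 3%N ->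
  [set x in S | (r x <= 3)%N] :\ v = front le 2 S.
Proof.
move=> vS rv; apply/setP=> x; rewrite !inE.
have [->|nxv] := eqVneq x v; first by rewrite vS rv.
by case xS: (x \in S) => //=; have := rank_neq xS vS nxv; rewrite rv; lia.
Qed.

Lemma rank_back v : v \in S -> (2 <= r v)%N -> rank le (back le 2 S) v = (r v - 2)%N.
Proof.
move=> vS hv; rewrite rank_subset ?inE ?vS ?hv //; last first.
  by apply/subsetP=> x; rewrite inE => /andP[].
rewrite -card_rank_between; last by rewrite hv ltnW // rank_lt_card.
by apply: eq_card => x; rewrite !inE andbA.
Qed.

Lemma rank_first4 v : v \in S -> (r v <= 3)%N ->
  rank le [set x in S | (r x <= 3)%N] v = r v.
Proof.
move=> vS hv; rewrite rank_subset ?inE ?vS ?hv //; last first.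
  by apply/subsetP=> x; rewrite inE => /andP[].
apply: eq_card => y; rewrite !inE.
by case yS: (y \in S); rewrite //= ltv_rankE //; case: ltnP => /=; lia.
Qed.

Variable T : cochain V.

Lemma bd_cap_elem t : bd le (cap le 2 T (elem_chain S)) t =
  if t == set0 then 0 else
  \sum_(v in back le 2 S)
     (if t == back le 2 S :\ v then (-1) ^+ r v * T (front le 2 S) else 0).
Proof.
rewrite /bd; case: eqP => // tn.
under eq_bigr do rewrite cap_elem.
rewrite big_mkcond [RHS]big_mkcond; apply: eq_bigr => v _.
rewrite in_setC; case vt: (v \in t) => /=.
  by case: ifP => //; case: ifP => // /eqP et; rewrite et !inE eqxx in vt.
case: (boolP (back le 2 S == v |: t)) => eb; last first.
  rewrite andbF mulr0; case: ifP => //; case: ifP => // /eqP et vb.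
  by move: eb; rewrite et setD1K ?eqxx.
have vb : v \in back le 2 S by rewrite (eqP eb) setU11.
move: (vb); rewrite inE => /andP[vS hv].
have n2 : (2 < n)%N by have := rank_lt_card vS; lia.
rewrite vS hv n2 /= [in t == _](eqP eb) setU1K ?vt // eqxx -(eqP eb) rank_back //.
by rewrite -{2}(subnK hv) exprD [(-1) ^+ 2]expr2 mulN1r opprK mulr1.
Qed.

Lemma cap_bd_elem t : cap le 2 T (bd le (elem_chain S)) t =
  \sum_(v in S) (if (3 < n)%N && (back le 2 (S :\ v) == t)
                 then (-1) ^+ r v * T (front le 2 (S :\ v)) else 0).
Proof.
rewrite /cap.
transitivity (\sum_(s : {set V} | (2 < #|s|)%N) \sum_(v : V)
   (if (v \notin s) && (v |: s == S) && (back le 2 s == t)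
    then (-1) ^+ rank le (v |: s) v * T (front le 2 s) else 0)).
  apply: eq_bigr => s hs; rewrite /bd.
  have sn : s != set0 by apply/eqP => e; rewrite e cards0 in hs.
  rewrite (negbTE sn); case: ifP => bt; last by rewrite big1 // => v _; rewrite andbF.
  rewrite mulr_suml big_mkcond; apply: eq_bigr => v _; rewrite in_setC.
  by case: (v \in s) => //=; rewrite /elem_chain; case: eqP; rewrite ?mulr1 ?mulr0 ?mul0r.
rewrite exchange_big /= [RHS]big_mkcond; apply: eq_bigr => v _.
rewrite (sum_only1 (i0 := S :\ v)) => [|s _]; last first.
  by case: ifP => // /andP[/andP[vs /eqP <-] _]; rewrite setU1K ?eqxx.
have := cardsD1 v S; case vS: (v \in S) => /= cS.
  rewrite setD1K // eqxx !inE eqxx /=.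
  have -> : (2 < #|S :\ v|)%N = (3 < n)%N by lia.
  by case: (3 < n)%N.
by case: ifP => //; case: ifP => // /andP[/andP[_ /eqP e] _]; rewrite -e setU11 in vS.
Qed.

(* [bd] is not augmented: it vanishes on the empty simplex, so the right-hand
   side has to vanish there as well. *)
Lemma cap_bd_elem_set0 : cap le 2 T (bd le (elem_chain S)) set0 = 0.
Proof.
rewrite cap_bd_elem; apply: big1 => v vS; case: ifP => // /andP[n3 /eqP e].
have card0 : #|back le 2 (S :\ v)| = 0%N by rewrite e cards0.
case: (leqP (r v) 2) => hv.
  by move: card0; rewrite back_setD1_early // card_rank_geq; lia.
have := cardsD1 v (back le 2 S).
by rewrite -back_setD1_late // card0 card_rank_geq inE vS (ltnW hv) /=; lia.
Qed.

Hypothesis T_cocycle_first4 : (3 < n)%N -> cobd le T [set x in S | (r x <= 3)%N] = 0.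

Lemma cobd_first4 : (3 < n)%N ->
  \sum_(v in S | (r v <= 2)%N) (-1) ^+ r v * T ([set x in S | (r x <= 3)%N] :\ v)
  = T (front le 2 S).
Proof.
move=> n3; have := T_cocycle_first4 n3; rewrite /cobd (bigID (fun v => (r v <= 2)%N)) /=.
have [v3 v3S rv3] := exists_rank n3.
rewrite [X in _ + X](sum_only1 (i0 := v3)) => [|v]; last first.
  rewrite inE => /andP[/andP[vS hv] hv2]; apply: contraNeq => _.
  by apply/eqP/rank_inj => //; lia.
rewrite inE v3S rv3 /= rank_first4 ?rv3 // first4_setD1_rank3 //.
rewrite (_ : (-1) ^+ 3 = -1 :> rat) // mulN1r => /eqP; rewrite subr_eq0 => /eqP <-.
apply: eq_big => [v|v /andP[vS hv]]; last by rewrite rank_first4 //; lia.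
by rewrite inE; case: (v \in S) => //=; case: (leqP (r v) 2) => /=; lia.
Qed.

Lemma cap_bd_elem_early t : t != set0 ->
  \sum_(v in back le 2 S | (r v <= 2)%N)
     (if t == back le 2 S :\ v then (-1) ^+ r v * T (front le 2 S) else 0) =
  \sum_(v in S | (r v <= 2)%N)
     (if (3 < n)%N && (back le 2 (S :\ v) == t)
      then (-1) ^+ r v * T (front le 2 (S :\ v)) else 0).
Proof.
move=> tn; have cB3 : #|[set x in S | (3 <= r x)%N]| = (n - 3)%N := card_rank_geq 3.
have [/andP[n3 /eqP Bt]|cnd] := boolP ((3 < n)%N && ([set x in S | (3 <= r x)%N] == t)).
  have [v2 v2S rv2] : exists2 v, v \in S & r v = 2%N by apply: exists_rank; lia.
  rewrite (sum_only1 (i0 := v2)) => [|v]; last first.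
    rewrite inE => /andP[/andP[vS hv] hv2]; apply: contraNeq => _.
    by apply/eqP/rank_inj => //; lia.
  rewrite inE v2S rv2 /= back_setD1_rank2 // Bt eqxx mul1r -(cobd_first4 n3).
  apply: eq_bigr => v /andP[vS hv].
  by rewrite back_setD1_early // front_setD1_early // n3 Bt eqxx.
rewrite [RHS]big1 => [|v /andP[vS hv]]; last by rewrite back_setD1_early // (negbTE cnd).
apply: big1 => v; rewrite inE => /andP[/andP[vS hv] hv2].
rewrite back_setD1_rank2 //; last by lia.
case: eqP => // et; move: cnd; rewrite -et eqxx andbT -leqNgt => n3.
by move: tn; rewrite -cards_eq0 et cB3; lia.
Qed.

Lemma bd_cap_elem_commute : bd le (cap le 2 T (elem_chain S)) =1 cap le 2 T (bd le (elem_chain S)).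
Proof.
move=> t; have [->|tn] := eqVneq t set0; first by rewrite cap_bd_elem_set0 bd_cap_elem eqxx.
rewrite bd_cap_elem cap_bd_elem (negbTE tn).
rewrite (bigID (fun v => (r v <= 2)%N)) [RHS](bigID (fun v => (r v <= 2)%N)) /=.
rewrite cap_bd_elem_early //; congr (_ + _); apply: eq_big => v.
  by rewrite inE; case: (v \in S) => //=; case: (leqP (r v) 2) => /=; lia.
rewrite inE => /andP[/andP[vS hv] hv2].
rewrite back_setD1_late ?front_setD1_late; try lia.
have n3 : (3 < n)%N by have := rank_lt_card vS; lia.
by rewrite n3 /= eq_sym.
Qed.

End OrderedSimplex.

Lemma chain_in_subset (V : finType) (S1 S2 : {set {set V}}) k (c : chain V) :
  S1 \subset S2 -> chain_in S1 k c -> chain_in S2 k c.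
Proof. by move=> S12 cS1 s /cS1[/(subsetP S12) sS2 cs]. Qed.

Section TriangulatedComplex.
Variables (V : finType) (K L1 : {set {set V}}) (le : rel V) (T : cochain V).
Hypotheses (K_complex : is_complex K) (le_ord : ordering K le).

Lemma bd_cap_commute k (c : chain V) :
  (forall s, s \in K -> #|s| = 4%N -> cobd le T s = 0) ->
  chain_in K k c -> bd le (cap le 2 T c) =1 cap le 2 T (bd le c).
Proof.
move=> T_cocycle cK; have [_ [le_anti [le_trans le_total]]] := le_ord.
apply: chain_linear_eq (chain_linear_comp (bd_linear le) (cap_linear le T))
  (chain_linear_comp (cap_linear le T) (bd_linear le)) _ => s /cK[sK _].
apply: (bd_cap_elem_commute le_anti le_trans (le_total s sK)) => s3.
have c4 : #|[set x in s | (rank le s x <= 3)%N]| = 4%N.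
  rewrite -(card_rank_ltn le_anti le_trans (le_total s sK) s3).
  by apply: eq_card => x; rewrite !inE.
have first4_K : [set x in s | (rank le s x <= 3)%N] \in K.
  apply: (K_complex.2 s) => //; last by rewrite -cards_eq0 c4.
  by apply/subsetP=> x; rewrite inE => /andP[].
exact: T_cocycle first4_K c4.
Qed.

Hypotheses (L1_full : full L1 K) (L1_good : good_ordering L1 le).
Hypothesis T_W : forall s, s \in Wcomplex K L1 -> #|s| = 3%N -> T s = 0.

Lemma back_in_L1 s : s \in K -> (2 < #|s|)%N -> T (front le 2 s) != 0 ->
  back le 2 s \in L1.
Proof.
move=> sK s2 Tf; have [le_refl [le_anti [le_trans le_total]]] := le_ord.
have tot := le_total s sK.
have Fs : front le 2 s \subset s by apply/subsetP=> x; rewrite inE => /andP[].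
have cF : #|front le 2 s| = 3%N.
  by rewrite -(card_rank_ltn le_anti le_trans tot s2); apply: eq_card => x; rewrite !inE.
have F_K : front le 2 s \in K by apply: (K_complex.2 s) => //; rewrite -cards_eq0 cF.
have [u uF uL] : exists2 u, u \in front le 2 s & u \in vert L1.
  case: (boolP [disjoint front le 2 s & vert L1]) => [disj|/pred0Pn[u /andP[]]].
    by case/eqP: Tf; apply: T_W cF; rewrite inE F_K disj.
  by exists u.
have back_vert : back le 2 s \subset vert L1.
  apply/subsetP=> x; rewrite inE => /andP[xs rx]; apply: L1_good uL _.
  move: uF; rewrite inE => /andP[us ru].
  have [<-//|nux] := eqVneq u x.
  suff : ltv le u x by case/andP.
  rewrite (ltv_rankE le_anti le_trans tot) //.
  by have := rank_neq le_anti le_trans tot us xs nux; lia.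
apply: L1_full back_vert; apply: K_complex.2 sK _ _.
  by apply/subsetP=> x; rewrite inE => /andP[].
by rewrite -cards_eq0 (card_rank_geq le_anti le_trans tot); lia.
Qed.

Lemma cap_chain_in (S : {set {set V}}) k (c : chain V) :
  is_complex S -> S \subset K -> chain_in S k c ->
  chain_in (S :&: L1) (k - 2) (cap le 2 T c).
Proof.
move=> S_complex SK cS t /cap_support[s [s2 <- cs Tf]].
have [sS cs_card] := cS s cs; have sK := subsetP SK s sS.
have [_ [le_anti [le_trans le_total]]] := le_ord.
have cB : #|back le 2 s| = (#|s| - 2)%N.
  exact: (card_rank_geq le_anti le_trans (le_total s sK)).
split; last by rewrite cB cs_card; lia.
rewrite inE back_in_L1 // andbT; apply: S_complex.2 sS _ _.
  by apply/subsetP=> x; rewrite inE => /andP[].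
by rewrite -cards_eq0 cB; lia.
Qed.

End TriangulatedComplex.

Theorem proposition3p6 (V : finType) (K L1 Dn : {set {set V}})
    (le : rel V) (T : cochain V) :
  is_complex K ->
  subcomplex L1 K -> full L1 K ->        (* L1 = K ∩ H_{1,0}, a full subcomplex *)
  subcomplex Dn K ->                     (* D^n is a subcomplex *)
  rel_2cocycle K (Wcomplex K L1) le T -> (* T ∈ Z^2(K, W; Q) *)
  ordering K le -> good_ordering L1 le ->
  (* (1) T cap commutes with the boundary *)
  (forall (k : nat) (c : chain V), chain_in K k c ->
     bd le (cap le 2 T c) =1 cap le 2 T (bd le c)) /\
  (* (2) T cap maps C_k(K) into C_{k-2}(L1) *)
  (forall (k : nat) (c : chain V), chain_in K k c ->
     chain_in L1 (k - 2) (cap le 2 T c)) /\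
  (* consequence: C_k(D^n) is sent into C_{k-2}(D^{n-1}), D^{n-1} = D^n ∩ L1 *)
  (forall (k : nat) (c : chain V), chain_in Dn k c ->
     chain_in (Dn :&: L1) (k - 2) (cap le 2 T c)).
Proof.
move=> K_complex _ L1_full [DnK Dn_complex] [T_cocycle T_W] le_ord L1_good.
split; first by move=> k c; apply: bd_cap_commute.
have cap_in := cap_chain_in K_complex le_ord L1_full L1_good T_W.
split=> k c cc; last exact: cap_in _ _ _ Dn_complex DnK cc.
exact: chain_in_subset (subsetIr K L1) (cap_in _ _ _ K_complex (subxx K) cc).
Qed.
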